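(* Let $\mathcal X$ be finite with $N=|\mathcal X|\ge2$, $c\in(0,1/N]$, $\varepsilon\ge 0$, $l\in\{1,\dots,N-1\}$, and let $K$ be a kernel from $\mathcal X$ to a finite set $\mathcal Y$ with $C(K,\mathcal Q_{\mathcal X}(c))\le\varepsilon$. If $\varepsilon<-\log\big((N-l)c\big)$, then for every $y\in\mathcal Y$ such that $K_{Y|X=x}(y)>0$ for some $x$, the number of $x\in\mathcal X$ with $K_{Y|X=x}(y)=0$ is at most $l-1$.
   Context: A kernel $K$ is a row-stochastic matrix with entries $K_{Y|X=x}(y)$; $(K\circ P_X)(y)=\sum_x K_{Y|X=x}(y)P_X(x)$. For full-support $P_X$ and $(K\circ P_X)(y)>0$, $\ell_{K\times P_X}(X\to y)=\log\frac{\max_{x}K_{Y|X=x}(y)}{(K\circ P_X)(y)}$ (natural log). $\mathcal Q_{\mathcal X}(c)=\{P_X\in\mathcal P(\mathcal X):\min_x P_X(x)\ge c\}$, and $C(K,\mathcal P)=\sup_{P_X\in\mathcal P}\sup_{y:(K\circ P_X)(y)>0}\ell_{K\times P_X}(X\to y)$. *)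

From HB Require Import structures.
From mathcomp Require Import all_boot all_order all_algebra.
From mathcomp Require Import all_classical all_reals all_analysis.
Set Implicit Arguments. Unset Strict Implicit. Unset Printing Implicit Defensive.
Import Order.TTheory GRing.Theory Num.Theory.
Local Open Scope ring_scope.

(* A kernel from X to Y: K x y = K_{Y|X=x}(y), row-stochastic. *)
Definition is_kernel (R : realType) (X Y : finType) (K : X -> Y -> R) : Prop :=
  (forall x y, 0 <= K x y) /\ (forall x, \sum_(y : Y) K x y = 1).

Definition is_distr (R : realType) (X : finType) (P : X -> R) : Prop :=
  (forall x, 0 <= P x) /\ \sum_(x : X) P x = 1.

Definition Qc (R : realType) (X : finType) (c : R) : set (X -> R) :=
  [set P | is_distr P /\ forall x, c <= P x].

Definition outdist (R : realType) (X Y : finType) (K : X -> Y -> R) (P : X -> R)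
  (y : Y) : R := \sum_(x : X) K x y * P x.

(* max_x K_{Y|X=x}(y) (entries are nonnegative, so 0 is a neutral start) *)
Definition maxcol (R : realType) (X Y : finType) (K : X -> Y -> R) (y : Y) : R :=
  \big[Num.max/0]_(x : X) K x y.

Definition leakage (R : realType) (X Y : finType) (K : X -> Y -> R) (P : X -> R)
  (y : Y) : R := ln (maxcol K y / outdist K P y).

Definition capC (R : realType) (X Y : finType) (K : X -> Y -> R)
  (Pset : set (X -> R)) : \bar R :=
  ereal_sup [set r : \bar R | exists P : X -> R, exists y : Y,
    [/\ Pset P, 0 < outdist K P y & r = (leakage K P y)%:E]]%classic.

From HB Require Import structures.
From mathcomp Require Import all_boot all_order all_algebra.
From mathcomp Require Import all_classical all_reals all_analysis.
From mathcomp Require Import zify.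
Set Implicit Arguments. Unset Strict Implicit. Unset Printing Implicit Defensive.
Import Order.TTheory GRing.Theory Num.Theory.
Local Open Scope ring_scope.

(* Suppose the column y vanishes on a set Z of at least l inputs but not
   everywhere.  Put the minimal mass c on each of the N - |Z| inputs outside Z
   and spread the remaining mass uniformly over Z; this is admissible because
   c <= 1/N.  Then (K o P)(y) <= (N - |Z|) c max_x K(y|x), so the leakage of y
   is at least -log((N - |Z|) c) >= -log((N - l) c) > eps, contradicting
   C(K, Q(c)) <= eps. *)

Section Leakage.
Variables (R : realType) (X Y : finType).
Implicit Types (K : X -> Y -> R) (P : X -> R).

Lemma leakage_le_capC K (Pset : set (X -> R)) P y :
  Pset P -> 0 < outdist K P y -> ((leakage K P y)%:E <= capC K Pset)%E.
Proof. by move=> PP out_gt0; apply: ereal_sup_ubound; exists P, y. Qed.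

Lemma le_maxcol K x y : K x y <= maxcol K y.
Proof. exact: le_bigmax. Qed.

Lemma outdist_gt0 K P y x0 :
  (forall x, 0 <= K x y) -> (forall x, 0 < P x) -> 0 < K x0 y ->
  0 < outdist K P y.
Proof.
move=> K_ge0 P_gt0 Kx0_gt0; rewrite /outdist (bigD1 x0) //=.
rewrite ltr_pwDl ?mulr_gt0 // sumr_ge0 // => x _.
by rewrite mulr_ge0 // ltW.
Qed.

Lemma outdist_le_zero_set K P y (Z : {set X}) c :
  (forall x, x \in Z -> K x y = 0) -> (forall x, 0 <= P x) ->
  (forall x, x \notin Z -> P x <= c) -> 0 <= maxcol K y ->
  outdist K P y <= #|~: Z|%:R * c * maxcol K y.
Proof.
move=> KZ P_ge0 P_le M_ge0; rewrite /outdist (bigID (mem Z)) /=.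
rewrite big1 ?add0r => [|x /KZ ->]; last by rewrite mul0r.
rewrite -mulrA mulr_natl -sumr_const.
rewrite [X in _ <= X](eq_bigl (fun x => x \notin Z)) => [|x]; last by rewrite inE.
apply: ler_sum => x xZ.
apply: le_trans (ler_wpM2r (P_ge0 x) (le_maxcol K x y)) _.
by rewrite [c * _]mulrC ler_wpM2l // P_le.
Qed.

Lemma leakage_ge_lnV K P y a :
  0 < a -> 0 < outdist K P y -> outdist K P y <= a * maxcol K y ->
  - ln a <= leakage K P y.
Proof.
move=> a_gt0 out_gt0 out_le.
have M_gt0 : 0 < maxcol K y.
  by rewrite -(pmulr_rgt0 _ a_gt0); apply: lt_le_trans out_le.
rewrite -lnV ?posrE // /leakage ler_ln ?posrE ?invr_gt0 ?divr_gt0 //.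
have -> : a^-1 = maxcol K y / (a * maxcol K y).
  by rewrite invfM mulrCA mulfV ?mulr1 // gt_eqF.
apply: ler_wpM2l; first exact: ltW.
by rewrite lef_pV2 ?posrE ?mulr_gt0.
Qed.

End Leakage.

Section FillDistr.
Variables (R : realType) (X : finType).

Definition fill_distr (Z : {set X}) (c : R) (x : X) : R :=
  if x \in Z then (1 - #|~: Z|%:R * c) / #|Z|%:R else c.

Lemma fill_distr_Qc (Z : {set X}) (c : R) :
  Z != finset.set0 -> 0 <= c -> c <= #|X|%:R^-1 -> Qc c (fill_distr Z c).
Proof.
move=> Z_neq0 c_ge0 c_le; have Z_gt0 : 0 < #|Z|%:R :> R.
  by rewrite ltr0n card_gt0.
have cZ : #|Z|%:R + #|~: Z|%:R = #|X|%:R :> R by rewrite -natrD cardsC.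
have cN_le1 : #|X|%:R * c <= 1.
  have N_gt0 : 0 < #|X|%:R :> R by rewrite -cZ ltr_pwDl.
  by rewrite -ler_pdivlMl // mulr1.
have fill_ge : forall x, c <= fill_distr Z c x.
  move=> x; rewrite /fill_distr; case: ifP => // _.
  by rewrite ler_pdivlMr // lerBrDr [c * _]mulrC -mulrDl cZ.
split=> //; split=> [x|]; first exact: le_trans (fill_ge x).
rewrite (bigID (mem Z)) /=.
rewrite (eq_bigr (fun=> (1 - #|~: Z|%:R * c) / #|Z|%:R)) => [|x xZ];
  last by rewrite /fill_distr xZ.
rewrite (eq_bigr (fun=> c)) => [|x /negbTE xZ]; last by rewrite /fill_distr xZ.
rewrite (eq_bigl (mem (~: Z)) (fun=> c)); last by move=> x /=; rewrite !inE.
rewrite !sumr_const -[_ *+ #|Z|]mulr_natr divfK ?gt_eqF //.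
by rewrite -[c *+ _]mulr_natl subrK.
Qed.

End FillDistr.

Theorem lemma1 (R : realType) (X Y : finType) (c eps : R) (l : nat)
  (K : X -> Y -> R) :
  (2 <= #|X|)%N ->
  0 < c -> c <= #|X|%:R^-1 ->
  0 <= eps ->
  (1 <= l)%N -> (l <= #|X| - 1)%N ->
  is_kernel K ->
  (capC K (Qc c) <= eps%:E)%E ->
  eps < - ln ((#|X| - l)%N%:R * c) ->
  forall y : Y, (exists x : X, 0 < K x y) ->
    (#|[set x : X | K x y == 0%R]| <= l - 1)%N.
Proof.
move=> _ c_gt0 c_le _ l_gt0 _ [K_ge0 _] capC_le eps_lt y [x0 Kx0_gt0].
set Z := [set x | K x y == 0]; rewrite leqNgt; apply/negP => Z_big.
have x0_notZ : x0 \in ~: Z by rewrite !inE gt_eqF.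
have supp_gt0 : (0 < #|~: Z|)%N by apply/card_gt0P; exists x0.
have supp_le : (#|~: Z| <= #|X| - l)%N by have := cardsC Z; lia.
have Z_neq0 : Z != finset.set0 by rewrite -card_gt0; lia.
pose P := fill_distr Z c.
have P_Qc : Qc c P by exact: fill_distr_Qc (ltW c_gt0) c_le.
have P_gt0 x : 0 < P x by case: P_Qc => _ /(_ x); apply: lt_le_trans.
have out_gt0 : 0 < outdist K P y by exact: outdist_gt0 P_gt0 Kx0_gt0.
have out_le : outdist K P y <= #|~: Z|%:R * c * maxcol K y.
  apply: outdist_le_zero_set => [x|x|x /negbTE xZ|].
  - by rewrite inE => /eqP.
  - exact: ltW.
  - by rewrite /P /fill_distr xZ.
  - exact: le_trans (K_ge0 x0 y) (le_maxcol K x0 y).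
have supp_c_gt0 : 0 < #|~: Z|%:R * c by rewrite mulr_gt0 ?ltr0n.
have leak_ge := leakage_ge_lnV supp_c_gt0 out_gt0 out_le.
have leak_le : leakage K P y <= eps.
  by rewrite -lee_fin; apply: le_trans capC_le; exact: leakage_le_capC.
have Nl_c_gt0 : 0 < (#|X| - l)%N%:R * c by rewrite mulr_gt0 ?ltr0n //; lia.
have lnV_le : - ln ((#|X| - l)%N%:R * c) <= - ln (#|~: Z|%:R * c).
  by rewrite lerN2 ler_ln ?posrE // ler_pM2r // ler_nat.
have := lt_le_trans eps_lt (le_trans lnV_le (le_trans leak_ge leak_le)).
by rewrite ltxx.
Qed.
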